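(* Let $F:\mathbb{R}^d\to\mathbb{R}$ be any differentiable function. Suppose that for all $t\ge1$, $\mathbb{E}[g_t\mid\mathcal{F}_t]=\nabla F(x_t)$, $\|g_t\|\le G$ almost surely, and the learning rate $\eta_t$ is a non-negative $\mathcal{F}_t$-measurable random variable. Assume the regularizers $\phi_1,\phi_2,\dots$ are convex and differentiable, the minimizers defining $x_t$ exist, $\phi_1$ attains its minimum, all expectations below are finite, and for all $t\ge1$ $$H_t(x_t)-H_{t+1}(x_{t+1})+\langle\ell_t,x_t\rangle\le0 .$$ Then FTRL with rescaled gradients satisfies for all $T\ge0$ and all $u\in\mathbb{R}^d$: $$\mathbb{E}[B_{\phi_{T+1}}(u,x_{T+1})]+\sum_{t=1}^T\mathbb{E}\big[\eta_t\langle\nabla F(x_t),x_t-u\rangle\big]\le \mathbb{E}[\phi_{T+1}(u)]-\min_{x\in\mathbb{R}^d}\phi_1(x).$$ In particular $\sum_{t=1}^T\mathbb{E}[\eta_t\langle\nabla F(x_t),x_t-u\rangle]\le\mathbb{E}[\phi_{T+1}(u)]-\min_x\phi_1(x)$, and if there exists $x^*$ with $\langle\nabla F(x),x-x^*\rangle\ge0$ for all $x\in\mathbb{R}^d$, then $\mathbb{E}[B_{\phi_{T+1}}(x^*,x_{T+1})]\le\mathbb{E}[\phi_{T+1}(x^* )]-\min_x\phi_1(x)$.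
   Context: $\|\cdot\|$ is the Euclidean norm, $G>0$. Iterates $x_1,x_2,\dots$ and random vectors $g_t$ (received after $x_t$); $\mathcal{F}_t$ is the $\sigma$-algebra generated by $x_1,\dots,x_t,g_1,\dots,g_{t-1}$. For differentiable $f$, $B_f(x,y)=f(x)-f(y)-\langle\nabla f(y),x-y\rangle$. FTRL with rescaled gradients (initial point $0$): given regularizers $\phi_t:\mathbb{R}^d\to\mathbb{R}$ ($\phi_t$ and $\eta_t$ may depend on $g_1,\dots,g_{t-1}$, i.e. are $\mathcal{F}_t$-measurable), set $\theta_0=0$; for $t=1,2,\dots$: $x_t\in\arg\min_{x}H_t(x)$ where $H_t(x)=\phi_t(x)-\langle\theta_{t-1},x\rangle$; receive $g_t$; $\ell_t=\eta_tg_t$; $\theta_t=\theta_{t-1}-\ell_t$. *)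

From HB Require Import structures.
From mathcomp Require Import all_boot all_order all_algebra.
From mathcomp Require Import all_classical all_reals all_analysis.
Set Implicit Arguments. Unset Strict Implicit. Unset Printing Implicit Defensive.
Import Order.TTheory GRing.Theory Num.Theory.
Import numFieldNormedType.Exports.
Local Open Scope classical_set_scope.
Local Open Scope ring_scope.

Section Defs.
Variable R : realType.

Definition dotv (d : nat) (u v : 'rV[R]_d) : R := \sum_(i < d) u ord0 i * v ord0 i.

Definition enorm (d : nat) (u : 'rV[R]_d) : R := Num.sqrt (dotv u u).

Definition grad (d : nat) (f : 'rV[R]_d -> R) (y : 'rV[R]_d) : 'rV[R]_d :=
  \row_(i < d) ('d f y (delta_mx ord0 i : 'rV[R]_d)).

Definition bregman (d : nat) (f : 'rV[R]_d -> R) (x y : 'rV[R]_d) : R :=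
  f x - f y - dotv (grad f y) (x - y).

Definition convex_fun (d : nat) (f : 'rV[R]_d -> R) : Prop :=
  forall (x y : 'rV[R]_d) (l : R), 0 <= l -> l <= 1 ->
    f (l *: x + (1 - l) *: y) <= l * f x + (1 - l) * f y.

(* minimum value of a function (used when the minimum is attained) *)
Definition minval (d : nat) (f : 'rV[R]_d -> R) : R := inf (range f).

(* FTRL with rescaled gradients: theta_t = theta_{t-1} - eta_t g_t, theta_0 = 0 *)
Definition theta (T : Type) (d : nat) (eta : nat -> T -> R)
  (g : nat -> T -> 'rV[R]_d) (t : nat) (w : T) : 'rV[R]_d :=
  - \sum_(1 <= s < t.+1) (eta s w *: g s w).

Definition Hfun (T : Type) (d : nat) (phi : nat -> T -> 'rV[R]_d -> R)
  (eta : nat -> T -> R) (g : nat -> T -> 'rV[R]_d) (t : nat) (w : T)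
  (x : 'rV[R]_d) : R :=
  phi t w x - dotv (theta eta g t.-1 w) x.

Section Prob.
Context {dO : measure_display} {O : measurableType dO}.

Definition gen_sigma (fs : set (O -> R)) : set (set O) :=
  <<s [set A | exists f, fs f /\ exists B : set R, measurable B /\ A = f @^-1` B] >>.

Definition filt (d : nat) (x g : nat -> O -> 'rV[R]_d) (t : nat) : set (set O) :=
  gen_sigma [set f | exists s (i : 'I_d),
     ((1 <= s <= t)%N /\ f = (fun w => x s w ord0 i)) \/
     ((1 <= s < t)%N /\ f = (fun w => g s w ord0 i))].

Definition measurable_wrt (F : set (set O)) (f : O -> R) : Prop :=
  forall B : set R, measurable B -> F (f @^-1` B).

Definition is_cond_exp (P : probability O R) (F : set (set O)) (X Y : O -> R) : Prop :=
  P.-integrable setT (fun w => (X w)%:E) /\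
  measurable_wrt F Y /\
  forall A, F A ->
    (\int[P]_(w in A) (X w)%:E = \int[P]_(w in A) (Y w)%:E)%E.

End Prob.
End Defs.

From HB Require Import structures.
From mathcomp Require Import all_boot all_order all_algebra.
From mathcomp Require Import all_classical all_reals all_analysis.
From mathcomp Require Import lra.
Import Order.TTheory GRing.Theory Num.Theory.
Import numFieldNormedType.Exports.
Import measurable_realfun HBNNSimple.
Set Implicit Arguments.
Unset Strict Implicit.
Unset Printing Implicit Defensive.
Local Open Scope classical_set_scope.
Local Open Scope ring_scope.

(* Deterministic: along every outcome, [x_(T+1)] minimises
   [H_(T+1) = phi_(T+1) - <theta_T, .>], so by first-order optimality
   [grad phi_(T+1) (x_(T+1)) = theta_T] ([grad_argmin]) and the Bregman
   divergence [B_(phi_(T+1))(u, x_(T+1))] equals [H_(T+1)(u) - H_(T+1)(x_(T+1))].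
   Telescoping the one-step hypothesis from [H_1 = phi_1] then gives the
   pathwise bound [ftrl_pathwise]: Bregman term plus linearised regret
   [sum_t eta_t <g_t, x_t - u>] is at most [phi_(T+1)(u) - min phi_1].

   Probabilistic: [eta_t (x_t - u)] is [F_t]-measurable, so the tower property
   of the conditional expectation [E[g_t | F_t] = grad F(x_t)] turns
   [E[eta_t <g_t, x_t - u>]] into [E[eta_t <grad F(x_t), x_t - u>]]
   ([expected_gradient_term]).  The tower property is derived from the
   defining identity of the conditional expectation through indicators,
   simple functions, nonnegative and then signed weights, and finally a
   truncation argument for vector pairings whose coordinates need not be
   integrable ([cond_exp_pairing]).  Integrating the pathwise bound
   ([expectation_of_bound]) yields the theorem; its two corollaries follow
   from the nonnegativity of the Bregman term and of the gradient terms. *)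

Section InnerProduct.
Variables (R : realType) (d : nat).
Implicit Types (a b c : 'rV[R]_d).

Lemma dotvDl a b c : dotv (a + b) c = dotv a c + dotv b c.
Proof. by rewrite /dotv -big_split /=; apply: eq_bigr => j _; rewrite mxE mulrDl. Qed.

Lemma dotvDr a b c : dotv a (b + c) = dotv a b + dotv a c.
Proof. by rewrite /dotv -big_split /=; apply: eq_bigr => j _; rewrite mxE mulrDr. Qed.

Lemma dotvZl r a b : dotv (r *: a) b = r * dotv a b.
Proof. by rewrite /dotv mulr_sumr; apply: eq_bigr => j _; rewrite mxE mulrA. Qed.

Lemma dotvZr r a b : dotv a (r *: b) = r * dotv a b.
Proof. by rewrite /dotv mulr_sumr; apply: eq_bigr => j _; rewrite mxE mulrCA. Qed.

Lemma dotvNl a b : dotv (- a) b = - dotv a b.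
Proof. by rewrite -scaleN1r dotvZl mulN1r. Qed.

Lemma dotvBr a b c : dotv a (b - c) = dotv a b - dotv a c.
Proof. by rewrite dotvDr -scaleN1r dotvZr mulN1r. Qed.

Lemma dotv_suml (I : Type) (r : seq I) (P : pred I) (F : I -> 'rV[R]_d) b :
  dotv (\sum_(j <- r | P j) F j) b = \sum_(j <- r | P j) dotv (F j) b.
Proof.
elim/big_rec2: _ => [|j y1 y2 _ <-]; last by rewrite dotvDl.
by rewrite /dotv big1 // => j _; rewrite mxE mul0r.
Qed.

Lemma dotv_delta a i : dotv a (delta_mx ord0 i) = a ord0 i.
Proof.
rewrite /dotv (bigD1 i) //= mxE !eqxx mulr1 big1 ?addr0 // => j ji.
by rewrite mxE (negbTE ji) andbF mulr0.
Qed.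

End InnerProduct.

(* Each coordinate is
   Fermat's rule for [s |-> f (s e_i + xm) - th_i s], minimal at [s = 0]. *)
Lemma grad_argmin (R : realType) d (f : 'rV[R]_d -> R) (th xm : 'rV[R]_d) :
  (forall y, differentiable f y) ->
  (forall y, f xm - dotv th xm <= f y - dotv th y) -> grad f xm = th.
Proof.
move=> df xm_min; apply/rowP => i; rewrite mxE.
set v : 'rV[R]_d := delta_mx ord0 i; set c := th ord0 i.
pose q (s : R) := f (s *: v + xm).
pose k (s : R) := q s - c * s.
have dq s : derivable q s 1.
  by apply: diff_derivable; apply: differentiable_comp.
have dlin s : derivable (fun s : R => c * s) s 1 by apply: derivableM.
have k_min s : k 0 <= k s.
  have := xm_min (s *: v + xm).
  rewrite /k /q scale0r add0r mulr0 subr0 dotvDr dotvZr /v dotv_delta -/c; lra.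
have Dk0 : 'D_1 k 0 = 0.
  apply: derive_val; apply: (@derive1_at_min _ k (-1) 1 0) => //.
  - by move=> s _; exact: derivableB.
  - by rewrite in_itv /= ltrN10 ltr01.
have Dq : 'D_1 q 0 = 'D_v f xm.
  rewrite /derive.
  have -> : (fun h : R => h^-1 *: (q (h *: 1 + 0) - q 0)) =
            (fun h => h^-1 *: (f (h *: v + xm) - f xm)).
    by apply: funext => h; rewrite /q scale0r add0r addr0 [h *: 1]mulr1.
  by [].
move: Dk0; rewrite deriveB // Dq deriveMl // derive_id mulr1 deriveE //.
by move/eqP; rewrite subr_eq0 => /eqP.
Qed.

Lemma minval_le (R : realType) d (f : 'rV[R]_d -> R) (m : R) (y : 'rV[R]_d) :
  (forall z, m <= f z) -> minval f <= f y.
Proof.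
move=> f_ge; apply: ge_inf; last by exists y.
by exists m => _ [z _ <-].
Qed.

Section PathwiseRegret.
Variables (R : realType) (O : Type) (d : nat).
Variables (x g : nat -> O -> 'rV[R]_d) (eta : nat -> O -> R).
Variables (phi : nat -> O -> 'rV[R]_d -> R) (w : O).
Local Notation H := (Hfun phi eta g).
Local Notation ell t := (eta t w *: g t w).

Hypothesis x_argmin : forall t, (1 <= t)%N -> forall y, H t w (x t w) <= H t w y.

(* Since [x_(t+1)] minimises [H_(t+1) = phi_(t+1) - <theta_t, .>], the gradient
   of [phi_(t+1)] there is [theta_t]; hence the Bregman divergence of
   [phi_(t+1)] from [x_(t+1)] is the excess value of [H_(t+1)]. *)
Lemma bregman_iterate t u : (forall y, differentiable (phi t.+1 w) y) ->
  bregman (phi t.+1 w) u (x t.+1 w) = H t.+1 w u - H t.+1 w (x t.+1 w).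
Proof.
move=> dphi; have grad_x : grad (phi t.+1 w) (x t.+1 w) = theta eta g t w.
  by apply: grad_argmin => // y; exact: x_argmin.
by rewrite /bregman grad_x /Hfun /= dotvBr; lra.
Qed.

Lemma Hfun1 y : H 1 w y = phi 1 w y.
Proof.
rewrite /Hfun /theta big_geq // oppr0 /dotv big1 ?subr0 // => j _.
by rewrite mxE mul0r.
Qed.

Lemma telescoped_steps n :
  (forall t, (1 <= t)%N ->
     H t w (x t w) - H t.+1 w (x t.+1 w) + dotv (ell t) (x t w) <= 0) ->
  H 1 w (x 1 w) - H n.+1 w (x n.+1 w) + \sum_(1 <= t < n.+1) dotv (ell t) (x t w)
    <= 0.
Proof.
move=> step; elim: n => [|n IHn]; first by rewrite big_geq // subrr addr0.
by rewrite big_nat_recr //=; have := step n.+1 isT; lra.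
Qed.

Lemma linearized_losses T u :
  \sum_(1 <= t < T.+1) eta t w * dotv (g t w) (x t w - u) =
  \sum_(1 <= t < T.+1) dotv (ell t) (x t w) + dotv (theta eta g T w) u.
Proof.
rewrite /theta dotvNl dotv_suml -sumrB; apply: eq_bigr => t _.
by rewrite dotvBr !dotvZl mulrBr.
Qed.

Lemma ftrl_pathwise (phi1 : 'rV[R]_d -> R) (m : R) T u :
  phi 1 w = phi1 -> (forall y, m <= phi1 y) ->
  (forall y, differentiable (phi T.+1 w) y) ->
  (forall t, (1 <= t)%N ->
     H t w (x t w) - H t.+1 w (x t.+1 w) + dotv (ell t) (x t w) <= 0) ->
  bregman (phi T.+1 w) u (x T.+1 w) +
    \sum_(1 <= t < T.+1) eta t w * dotv (g t w) (x t w - u)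
  <= phi T.+1 w u - minval phi1.
Proof.
move=> phi1E phi1_ge dphi step.
have := telescoped_steps T step; have := minval_le (x 1 w) phi1_ge.
have := x_argmin (isT : (1 <= T.+1)%N) u.
rewrite bregman_iterate // linearized_losses Hfun1 phi1E /Hfun /=; lra.
Qed.

End PathwiseRegret.

Section IntegrationTools.
Context {R : realType} {dO : measure_display} {O : measurableType dO}.
Variable mu : {measure set O -> \bar R}.

Lemma integral_sum_nat (m n : nat) (f : nat -> O -> \bar R) :
  (forall k, (m <= k < n)%N -> mu.-integrable setT (f k)) ->
  (\int[mu]_w (\sum_(m <= k < n) f k w) = \sum_(m <= k < n) \int[mu]_w f k w)%E.
Proof.
move=> intf; pose f' k := if (m <= k < n)%N then f k else cst 0%E.
have f'E k : (m <= k < n)%N -> f' k = f k by rewrite /f' => ->.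
transitivity (\int[mu]_w (\sum_(m <= k < n) f' k w))%E.
  by apply: eq_integral => w _; apply: eq_big_nat => k /f'E ->.
rewrite integral_sum //; first by apply: eq_big_nat => k /f'E ->.
by move=> k; rewrite /f'; case: ifP => [/intf //|_]; exact: integrable0.
Qed.

Lemma integrable_sum_nat (m n : nat) (f : nat -> O -> \bar R) :
  (forall k, (m <= k < n)%N -> mu.-integrable setT (f k)) ->
  mu.-integrable setT (fun w => \sum_(m <= k < n) f k w)%E.
Proof.
move=> intf; under eq_fun do rewrite big_nat_cond.
by apply: integrable_sum => // k /andP[/intf].
Qed.

Lemma integrable_mul_dom (g h Z : O -> R) :
  measurable_fun setT g -> measurable_fun setT Z -> (forall w, `|g w| <= `|h w|) ->
  mu.-integrable setT (fun w => (h w * Z w)%:E) ->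
  mu.-integrable setT (fun w => (g w * Z w)%:E).
Proof.
move=> mg mZ gh ihZ; apply: le_integrable ihZ => //.
- by apply/measurable_EFinP; exact: measurable_funM.
- by move=> w _; rewrite !abse_EFin lee_fin !normrM ler_wpM2r.
Qed.

Lemma integrable_mul_bounded (g Z : O -> R) (c : R) :
  measurable_fun setT g -> (forall w, `|g w| <= c) ->
  mu.-integrable setT (fun w => (Z w)%:E) ->
  mu.-integrable setT (fun w => (g w * Z w)%:E).
Proof.
move=> mg gc iZ; have /integrableP[/measurable_EFinP mZ _] := iZ.
apply: (@integrable_mul_dom _ (cst c)) => //.
  by move=> w; apply: le_trans (gc w) _; exact: ler_norm.
by under eq_fun do rewrite EFinM; exact: integrableZl.
Qed.

Lemma integral_indic_mul (f : O -> R) (A : set O) : measurable A ->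
  (\int[mu]_w (\1_A w * f w)%:E = \int[mu]_(w in A) (f w)%:E)%E.
Proof.
move=> mA; rewrite [RHS]integral_mkcond; apply: eq_integral => w _.
by rewrite patchE indicE; case: (w \in A); rewrite /= ?mul1r ?mul0r.
Qed.

Lemma cvg_integral_dominated (fn : nat -> O -> R) (f : O -> R) :
  (forall n, measurable_fun setT (fn n)) ->
  mu.-integrable setT (fun w => (f w)%:E) ->
  (forall w, (fn n w)%:E @[n --> \oo] --> (f w)%:E) ->
  (forall n w, `|fn n w| <= `|f w|) ->
  (\int[mu]_w (fn n w)%:E)%E @[n --> \oo] --> (\int[mu]_w (f w)%:E)%E.
Proof.
move=> mfn intf fn_f fn_le; have /integrableP[mf _] := intf.
have mfnE n : measurable_fun setT (fun w => (fn n w)%:E).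
  exact/measurable_EFinP.
have fn_fE : {ae mu, forall w, setT w -> (fn n w)%:E @[n --> \oo] --> (f w)%:E}.
  by apply: aeW => w _; exact: fn_f.
have fn_leE : {ae mu, forall w n, setT w -> (`|(fn n w)%:E| <= `|(f w)%:E|)%E}.
  by apply: aeW => w n _; rewrite !abse_EFin lee_fin.
by case: (dominated_convergence measurableT mfnE mf fn_fE (integrable_abse intf)
  fn_leE).
Qed.

Lemma cvg_integral_truncated (N S : O -> R) : measurable_fun setT N ->
  mu.-integrable setT (fun w => (S w)%:E) ->
  (\int[mu]_w (\1_[set w | N w <= n%:R] w * S w)%:E)%E @[n --> \oo]
    --> (\int[mu]_w (S w)%:E)%E.
Proof.
move=> mN iS; have /integrableP[/measurable_EFinP mS _] := iS.
apply: cvg_integral_dominated => //.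
- move=> n; apply: measurable_funM => //; apply: measurable_indic.
  have := mN measurableT _ (measurable_itv `]-oo, n%:R]); rewrite setTI.
  by congr measurable; apply/seteqP; split => w /=; rewrite in_itv.
- move=> w; apply: cvg_near_cst; near=> n; rewrite indicE mem_set ?mul1r //=.
  by near: n; exact: nbhs_infty_ger.
- move=> n w; rewrite normrM indicE.
  by case: (_ \in _); rewrite /= ?normr1 ?normr0 ?mul1r ?mul0r.
Unshelve. all: by end_near.
Qed.

End IntegrationTools.

Section ConditionalExpectation.
Context {R : realType} {dO : measure_display} {O : measurableType dO}.
Variables (P : probability O R) (G0 : set (set O)).
Hypothesis G0_meas : G0 `<=` measurable.

Local Notation OG := (g_sigma_algebraType G0).

Lemma sigmaG_measurable (A : set O) : <<s G0>> A -> measurable A.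
Proof. by apply: smallest_sub => //; exact: sigma_algebra_measurable. Qed.

Lemma measurable_wrtP (h : O -> R) :
  measurable_wrt <<s G0>> h <-> measurable_fun (setT : set OG) (h : OG -> R).
Proof.
split=> [hG _ B mB | hG B mB]; first by rewrite setTI; exact: hG.
by have := hG measurableT B mB; rewrite setTI.
Qed.

Lemma measurableG_measurable (h : OG -> R) :
  measurable_fun setT h -> measurable_fun (setT : set O) (h : O -> R).
Proof.
move=> hG _ B mB; rewrite setTI; apply: sigmaG_measurable.
by have := hG measurableT B mB; rewrite setTI.
Qed.

Section Tower.
Variables (X Y : O -> R).
Hypothesis XY : is_cond_exp P <<s G0>> X Y.

Lemma cond_exp_measurableX : measurable_fun setT X.
Proof. by case: XY => /integrableP[/measurable_EFinP]. Qed.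

Lemma cond_exp_measurableY : measurable_fun setT Y.
Proof. by case: XY => _ [/measurable_wrtP/measurableG_measurable]. Qed.

(* A conditional expectation has the same (finite) mean, hence is integrable. *)
Lemma cond_exp_integrable : P.-integrable setT (fun w => (Y w)%:E).
Proof.
case: XY => iX [_ XY_eq]; have mY := cond_exp_measurableY.
apply/integrableP; split; first exact/measurable_EFinP.
rewrite integral_fin_num_abs // -(XY_eq setT (@measurableT _ OG)).
by rewrite -integral_fin_num_abs //; [case/integrableP: iX|exact: cond_exp_measurableX].
Qed.

Lemma cond_exp_indic (A : set OG) : measurable A ->
  (\int[P]_w (\1_A w * X w)%:E = \int[P]_w (\1_A w * Y w)%:E)%E.
Proof.
move=> mA; rewrite !integral_indic_mul; try exact: sigmaG_measurable.
by case: XY => _ [_]; exact.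
Qed.

(* The defining identity extends by linearity to [G]-simple weights. *)
Lemma cond_exp_simple (s : {nnsfun OG >-> R}) :
  (\int[P]_w (s (w : OG) * X w)%:E = \int[P]_w (s (w : OG) * Y w)%:E)%E.
Proof.
have iX : P.-integrable setT (fun w => (X w)%:E) by case: XY.
set S := finmap.enum_fset (fset_set (range s)).
have mB i : measurable (s @^-1` [set S`_i] : set OG).
  rewrite -[X in measurable X]setTI.
  by apply: measurable_funP => //; exact: measurable_set1.
have mBO i : measurable (s @^-1` [set S`_i] : set O) by exact: sigmaG_measurable (mB i).
have indic_le i (w : O) : `|\1_(s @^-1` [set S`_i]) w| <= 1 :> R.
  by rewrite indicE; case: (_ \in _); rewrite /= ?normr1 ?normr0.
have int_indic i Z : P.-integrable setT (fun w => (Z w)%:E) ->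
    P.-integrable setT (fun w => (\1_(s @^-1` [set S`_i]) w * Z w)%:E).
  by apply: (integrable_mul_bounded _ (indic_le i)); exact: measurable_indic.
have int_term i Z : P.-integrable setT (fun w => (Z w)%:E) ->
    P.-integrable setT
      (fun w => ((S`_i)%:E * (\1_(s @^-1` [set S`_i]) w * Z w)%:E)%E).
  by move=> iZ; apply: integrableZl => //; exact: int_indic.
have decomp (Z : O -> R) : (fun w => (s (w : OG) * Z w)%:E) =
    (fun w => \sum_(i < size S) (S`_i)%:E * (\1_(s @^-1` [set S`_i]) w * Z w)%:E)%E.
  apply: funext => w; rewrite (fimfunEord s w) -/S mulr_suml sumEFin.
  by congr (_%:E); apply: eq_bigr => i _; rewrite mulrA.
rewrite (decomp X) (decomp Y) !integral_sum //; last 2 first.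
- by move=> i; apply: int_term; exact: cond_exp_integrable.
- by move=> i; exact: int_term.
apply: eq_bigr => i _; rewrite !integralZl ?cond_exp_indic //; apply: int_indic => //.
exact: cond_exp_integrable.
Qed.

(* Tower property for a nonnegative [G]-measurable weight [h]: approximate [h]
   from below by [G]-simple functions and pass to the limit by dominated
   convergence. *)
Lemma cond_exp_nonneg (h : O -> R) :
  measurable_wrt <<s G0>> h -> (forall w, 0 <= h w) ->
  P.-integrable setT (fun w => (h w * X w)%:E) ->
  P.-integrable setT (fun w => (h w * Y w)%:E) ->
  (\int[P]_w (h w * X w)%:E = \int[P]_w (h w * Y w)%:E)%E.
Proof.
move=> /measurable_wrtP hG h0 iX iY.
have hGE : measurable_fun (setT : set OG) (EFin \o (h : OG -> R)).
  exact/measurable_EFinP.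
have h0E (w : OG) : setT w -> (0 <= (EFin \o (h : OG -> R)) w)%E.
  by move=> _; rewrite lee_fin.
pose s := nnsfun_approx (@measurableT _ OG) hGE.
have s_le n (w : O) : 0 <= s n w <= h w.
  apply/andP; split => //.
  by have := le_approx n h0E (I : setT w); rewrite -nnsfun_approxE lee_fin.
have approx_cvg Z : measurable_fun setT Z ->
    P.-integrable setT (fun w => (h w * Z w)%:E) ->
    (\int[P]_w (s n (w : OG) * Z w)%:E)%E @[n --> \oo]
      --> (\int[P]_w (h w * Z w)%:E)%E.
  move=> mZ ihZ; apply: cvg_integral_dominated => //.
  - move=> n; apply: measurable_funM => //.
    by apply: measurableG_measurable; exact: measurable_funP.
  - move=> w; under eq_fun do rewrite EFinM; rewrite EFinM.
    apply: cvgeM; first exact: mule_def_fin.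
      exact: (@cvg_nnsfun_approx _ OG R setT measurableT _ hGE h0E w I).
    exact: cvg_cst.
  - move=> n w; have /andP[s0 sh] := s_le n w.
    by rewrite !normrM ler_wpM2r // !ger0_norm // (le_trans s0).
have cvgX := approx_cvg _ cond_exp_measurableX iX.
have cvgY := approx_cvg _ cond_exp_measurableY iY.
rewrite (_ : (fun n => _) = (fun n => \int[P]_w (s n (w : OG) * Y w)%:E)%E) in cvgX.
  exact: cvg_unique cvgX cvgY.
by apply: funext => n; exact: cond_exp_simple.
Qed.

(* Tower property for an arbitrary [G]-measurable weight [h]: split [h] into
   its positive and negative parts. *)
Lemma cond_exp_mul (h : O -> R) : measurable_wrt <<s G0>> h ->
  P.-integrable setT (fun w => (h w * X w)%:E) ->
  P.-integrable setT (fun w => (h w * Y w)%:E) ->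
  (\int[P]_w (h w * X w)%:E = \int[P]_w (h w * Y w)%:E)%E.
Proof.
move=> hG iX iY; have hGT := proj1 (measurable_wrtP h) hG.
have parts_le w : h^\+ w <= `|h w| /\ h^\- w <= `|h w|.
  have := congr1 (fun f => f w) (funrposDneg h); rewrite !fctE /= => <-.
  by split; [rewrite lerDl funrneg_ge0 | rewrite lerDr funrpos_ge0].
have [mX mY] := (cond_exp_measurableX, cond_exp_measurableY).
have int_part k Z : measurable_fun (setT : set OG) (k : OG -> R) ->
    (forall w, 0 <= k w <= `|h w|) -> measurable_fun setT Z ->
    P.-integrable setT (fun w => (h w * Z w)%:E) ->
    P.-integrable setT (fun w => (k w * Z w)%:E).
  move=> kG kh mZ; apply: integrable_mul_dom => //; first exact: measurableG_measurable.
  by move=> w; have /andP[k0 kle] := kh w; rewrite ger0_norm.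
have [hpG hnG] := (measurable_funrpos hGT, measurable_funrneg hGT).
have hp_le w : 0 <= h^\+ w <= `|h w| by rewrite funrpos_ge0 (parts_le w).1.
have hn_le w : 0 <= h^\- w <= `|h w| by rewrite funrneg_ge0 (parts_le w).2.
have split_int Z : measurable_fun setT Z ->
    P.-integrable setT (fun w => (h w * Z w)%:E) ->
    (\int[P]_w (h w * Z w)%:E = \int[P]_w (h^\+ w * Z w)%:E
                                - \int[P]_w (h^\- w * Z w)%:E)%E.
  move=> mZ ihZ; rewrite -integralB //; try exact: int_part.
  apply: eq_integral => w _; rewrite -EFinB -mulrBl.
  by have := congr1 (fun f => f w) (funrposBneg h); rewrite !fctE => ->.
have part_eq k : measurable_fun (setT : set OG) (k : OG -> R) ->
    (forall w, 0 <= k w <= `|h w|) ->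
    (\int[P]_w (k w * X w)%:E = \int[P]_w (k w * Y w)%:E)%E.
  move=> kG kh; apply: cond_exp_nonneg; last 2 first; try exact: int_part.
  - exact/measurable_wrtP.
  - by move=> w; case/andP: (kh w).
by rewrite (split_int X) // (split_int Y) // (part_eq _ hpG hp_le) (part_eq _ hnG hn_le).
Qed.

End Tower.

(* Conditioning inside a pairing [sum_i Z_i X_i] with bounded [G]-measurable
   weights [Z]: every coordinate term is then integrable, and the tower
   property applies coordinate by coordinate. *)
Lemma cond_exp_pairing_bounded d (X Y Z : O -> 'I_d -> R) (c : R) :
  (forall i, is_cond_exp P <<s G0>> (X ^~ i) (Y ^~ i)) ->
  (forall i, measurable_wrt <<s G0>> (Z ^~ i)) ->
  (forall w i, `|Z w i| <= c) ->
  (\int[P]_w (\sum_i Z w i * X w i)%:E = \int[P]_w (\sum_i Z w i * Y w i)%:E)%E.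
Proof.
move=> XY ZG Zc.
have int_term (V : O -> 'I_d -> R) i : P.-integrable setT (fun w => (V w i)%:E) ->
    P.-integrable setT (fun w => (Z w i * V w i)%:E).
  apply: integrable_mul_bounded (Zc ^~ i).
  by apply: measurableG_measurable; exact/measurable_wrtP.
have split_sum (V : O -> 'I_d -> R) :
    (fun w => (\sum_i Z w i * V w i)%:E) = (fun w => \sum_i (Z w i * V w i)%:E)%E.
  by apply: funext => w; rewrite sumEFin.
rewrite (split_sum X) (split_sum Y) !integral_sum //; last 2 first.
- by move=> i; apply: int_term; exact: cond_exp_integrable (XY i).
- by move=> i; apply: int_term; case: (XY i).
apply: eq_bigr => i _; apply: (cond_exp_mul (XY i) (h := Z ^~ i)) => //.
- by apply: int_term; case: (XY i).
- by apply: int_term; exact: cond_exp_integrable (XY i).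
Qed.

(* The same with only the total pairings assumed integrable: truncate the
   weights to the [G]-measurable sets [sum_i |Z_i| <= n] and let [n -> oo]. *)
Lemma cond_exp_pairing d (X Y Z : O -> 'I_d -> R) :
  (forall i, is_cond_exp P <<s G0>> (X ^~ i) (Y ^~ i)) ->
  (forall i, measurable_wrt <<s G0>> (Z ^~ i)) ->
  P.-integrable setT (fun w => (\sum_i Z w i * X w i)%:E) ->
  P.-integrable setT (fun w => (\sum_i Z w i * Y w i)%:E) ->
  (\int[P]_w (\sum_i Z w i * X w i)%:E = \int[P]_w (\sum_i Z w i * Y w i)%:E)%E.
Proof.
move=> XY ZG iX iY.
pose N w := \sum_i `|Z w i|.
have NG : measurable_fun (setT : set OG) (N : OG -> R).
  apply: measurable_sum => i; apply: measurableT_comp => //.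
  exact/measurable_wrtP.
pose A n : set O := [set w | N w <= n%:R].
have AG n : measurable (A n : set OG).
  have := NG measurableT _ (measurable_itv `]-oo, n%:R]); rewrite setTI.
  by congr measurable; apply/seteqP; split => w /=; rewrite in_itv.
have weight_le n w i : `|\1_(A n) w * Z w i| <= n%:R.
  rewrite normrM indicE; case: (boolP (w \in A n)); rewrite /= ?normr0 ?mul0r //.
  rewrite normr1 mul1r inE /A /N /= => /(le_trans _); apply.
  by rewrite (bigD1 i) //= lerDl sumr_ge0.
have truncated_eq n :
    (\int[P]_w (\1_(A n) w * \sum_i Z w i * X w i)%:E =
     \int[P]_w (\1_(A n) w * \sum_i Z w i * Y w i)%:E)%E.
  have distr (V : O -> 'I_d -> R) :
      (fun w => (\1_(A n) w * \sum_i Z w i * V w i)%:E) =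
      (fun w => (\sum_i (\1_(A n) w * Z w i) * V w i)%:E).
    apply: funext => w; rewrite mulr_sumr; congr (_%:E).
    by apply: eq_bigr => i _; rewrite mulrA.
  rewrite (distr X) (distr Y); apply: cond_exp_pairing_bounded (weight_le n) => //.
  move=> i; apply/measurable_wrtP; apply: measurable_funM.
    exact: measurable_indic.
  exact/measurable_wrtP.
have cvgX := cvg_integral_truncated (measurableG_measurable NG) iX.
have cvgY := cvg_integral_truncated (measurableG_measurable NG) iY.
rewrite (_ : (fun n => _) = (fun n =>
    \int[P]_w (\1_(A n) w * \sum_i Z w i * Y w i)%:E)%E) in cvgX.
  exact: cvg_unique cvgX cvgY.
by apply: funext => n; exact: truncated_eq.
Qed.

End ConditionalExpectation.

Section Filtration.
Context {R : realType} {dO : measure_display} {O : measurableType dO}.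
Variables (d : nat) (x g : nat -> O -> 'rV[R]_d).
Hypothesis x_meas : forall t (i : 'I_d), measurable_fun setT (fun w => x t w ord0 i).
Hypothesis g_meas : forall t (i : 'I_d), measurable_fun setT (fun w => g t w ord0 i).

Lemma filt_generated t :
  exists2 G0 : set (set O), G0 `<=` measurable & filt x g t = <<s G0>>.
Proof.
eexists; last reflexivity.
move=> _ [f [[s [i [[_ ->]|[_ ->]]]] [B [mB ->]]]].
- by have := x_meas s i measurableT mB; rewrite setTI.
- by have := g_meas s i measurableT mB; rewrite setTI.
Qed.

Lemma filt_iterate t (i : 'I_d) : (1 <= t)%N ->
  measurable_wrt (filt x g t) (fun w => x t w ord0 i).
Proof.
move=> t1 B mB; apply: sub_sigma_algebra.
exists (fun w => x t w ord0 i); split; last by exists B.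
by exists t, i; left; rewrite t1 leqnn.
Qed.

Lemma expected_gradient_term (P : probability O R) (F : 'rV[R]_d -> R)
    (eta : nat -> O -> R) (t : nat) (u : 'rV[R]_d) :
  (1 <= t)%N ->
  (forall i : 'I_d, is_cond_exp P (filt x g t) (fun w => g t w ord0 i)
                                 (fun w => grad F (x t w) ord0 i)) ->
  measurable_wrt (filt x g t) (eta t) ->
  P.-integrable setT (fun w => (eta t w * dotv (grad F (x t w)) (x t w - u))%:E) ->
  P.-integrable setT (fun w => (eta t w * dotv (g t w) (x t w - u))%:E) ->
  (\int[P]_w (eta t w * dotv (grad F (x t w)) (x t w - u))%:E =
   \int[P]_w (eta t w * dotv (g t w) (x t w - u))%:E)%E.
Proof.
move=> t1 unbiased etaF iGrad iG.
have [G0 G0_meas filtE] := filt_generated t.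
rewrite filtE in unbiased etaF.
pose Z w (i : 'I_d) := eta t w * (x t w - u) ord0 i.
have ZG i : measurable_wrt <<s G0>> (Z ^~ i).
  apply/measurable_wrtP; apply: measurable_funM; first exact/measurable_wrtP.
  under eq_fun do rewrite !mxE.
  apply: measurable_funB => //; apply/measurable_wrtP.
  by rewrite -filtE; exact: filt_iterate.
have pairingE (a : O -> 'rV[R]_d) :
    (fun w => (eta t w * dotv (a w) (x t w - u))%:E) =
    (fun w => (\sum_i Z w i * a w ord0 i)%:E).
  apply: funext => w; rewrite /dotv mulr_sumr; congr (_%:E).
  by apply: eq_bigr => i _; rewrite /Z [a w ord0 i * _]mulrC mulrA.
rewrite pairingE in iGrad; rewrite pairingE in iG; rewrite !pairingE.
by symmetry; apply: (cond_exp_pairing G0_meas (X := fun w i => g t w ord0 i)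
  (Y := fun w i => grad F (x t w) ord0 i)).
Qed.

End Filtration.

Lemma expectation_of_bound (R : realType) (dO : measure_display)
    (O : measurableType dO) (P : probability O R) (B Phi : O -> R)
    (S : nat -> O -> R) (m : R) (T : nat) :
  P.-integrable setT (fun w => (B w)%:E) ->
  P.-integrable setT (fun w => (Phi w)%:E) ->
  (forall t, (1 <= t < T.+1)%N -> P.-integrable setT (fun w => (S t w)%:E)) ->
  (forall w, B w + \sum_(1 <= t < T.+1) S t w <= Phi w - m) ->
  (\int[P]_w (B w)%:E + \sum_(1 <= t < T.+1) \int[P]_w (S t w)%:E
    <= \int[P]_w (Phi w)%:E - m%:E)%E.
Proof.
move=> iB iPhi iS bound.
have im := finite_measure_integrable_cst P m measurableT.
have mE : (m%:E = \int[P]_w cst m%:E w)%E.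
  rewrite integral_cst // -[LHS]mule1; congr (_ * _)%E.
  by symmetry; exact: probability_setT.
rewrite -(integral_sum_nat (f := fun t w => (S t w)%:E)) //.
rewrite -integralD ?integrable_sum_nat // mE -integralB //.
apply: le_integral => //; [exact/integrableD/integrable_sum_nat|exact: integrableB|].
by move=> w _; rewrite /= sumEFin -EFinD -EFinB lee_fin.
Qed.

Theorem lemma2 (R : realType) (dO : measure_display) (O : measurableType dO)
  (P : probability O R) (d : nat) (G : R)
  (F : 'rV[R]_d -> R)
  (x g : nat -> O -> 'rV[R]_d) (eta : nat -> O -> R)
  (phi : nat -> O -> 'rV[R]_d -> R) (phi1 : 'rV[R]_d -> R)
  (T : nat) (u : 'rV[R]_d) :
  0 < G ->
  (forall y, differentiable F y) ->
  (* x_t and g_t are random vectors *)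
  (forall t (i : 'I_d), measurable_fun setT (fun w => x t w ord0 i)) ->
  (forall t (i : 'I_d), measurable_fun setT (fun w => g t w ord0 i)) ->
  (* E[g_t | F_t] = grad F (x_t) *)
  (forall t, (1 <= t)%N -> forall i : 'I_d,
     is_cond_exp P (filt x g t) (fun w => g t w ord0 i)
                               (fun w => grad F (x t w) ord0 i)) ->
  (* ||g_t|| <= G almost surely *)
  (forall t, (1 <= t)%N -> {ae P, forall w, enorm (g t w) <= G}) ->
  (* eta_t non-negative, F_t-measurable *)
  (forall t, (1 <= t)%N -> forall w, 0 <= eta t w) ->
  (forall t, (1 <= t)%N -> measurable_wrt (filt x g t) (eta t)) ->
  (* phi_t is F_t-measurable, phi_1 is deterministic *)
  (forall t, (1 <= t)%N -> forall y, measurable_wrt (filt x g t) (fun w => phi t w y)) ->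
  (forall w, phi 1%N w = phi1) ->
  (* regularizers convex and differentiable *)
  (forall t, (1 <= t)%N -> forall w, convex_fun (phi t w)) ->
  (forall t, (1 <= t)%N -> forall w y, differentiable (phi t w) y) ->
  (* x_t in argmin H_t *)
  (forall t, (1 <= t)%N -> forall w y,
     Hfun phi eta g t w (x t w) <= Hfun phi eta g t w y) ->
  (* phi_1 attains its minimum *)
  (exists x0, forall y, phi1 x0 <= phi1 y) ->
  (* all expectations are finite *)
  P.-integrable setT (fun w => (bregman (phi T.+1 w) u (x T.+1 w))%:E) ->
  P.-integrable setT (fun w => (phi T.+1 w u)%:E) ->
  (forall t, (1 <= t <= T)%N ->
     P.-integrable setT (fun w => (eta t w * dotv (grad F (x t w)) (x t w - u))%:E)) ->
  (forall t, (1 <= t <= T)%N ->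
     P.-integrable setT (fun w => (eta t w * dotv (g t w) (x t w - u))%:E)) ->
  (* H_t(x_t) - H_{t+1}(x_{t+1}) + <l_t, x_t> <= 0 *)
  (forall t, (1 <= t)%N -> forall w,
     Hfun phi eta g t w (x t w) - Hfun phi eta g t.+1 w (x t.+1 w)
       + dotv (eta t w *: g t w) (x t w) <= 0) ->
  ((\int[P]_w (bregman (phi T.+1 w) u (x T.+1 w))%:E
    + \sum_(1 <= t < T.+1)
        \int[P]_w (eta t w * dotv (grad F (x t w)) (x t w - u))%:E
    <= \int[P]_w (phi T.+1 w u)%:E - (minval phi1)%:E)%E
  /\
  (\sum_(1 <= t < T.+1)
        \int[P]_w (eta t w * dotv (grad F (x t w)) (x t w - u))%:E
    <= \int[P]_w (phi T.+1 w u)%:E - (minval phi1)%:E)%E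
  /\
  ((forall y, 0 <= dotv (grad F y) (y - u)) ->
   (\int[P]_w (bregman (phi T.+1 w) u (x T.+1 w))%:E
    <= \int[P]_w (phi T.+1 w u)%:E - (minval phi1)%:E)%E)).
Proof.
move=> _ _ x_meas g_meas unbiased _ eta_ge0 etaF _ phi1E _ dphi x_argmin
  [x0 x0_min] iB iPhi iGrad iG step.
have argmin w t : (1 <= t)%N -> forall y,
    Hfun phi eta g t w (x t w) <= Hfun phi eta g t w y.
  by move=> t1; exact: x_argmin.
have gradE t : (1 <= t < T.+1)%N ->
    (\int[P]_w (eta t w * dotv (grad F (x t w)) (x t w - u))%:E =
     \int[P]_w (eta t w * dotv (g t w) (x t w - u))%:E)%E.
  move=> tT; have t1 : (1 <= t)%N by case/andP: tT.
  apply: expected_gradient_term => //; first by move=> i; exact: unbiased.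
  - exact: etaF.
  - exact: iGrad.
  - exact: iG.
(* Main claim: integrate the pathwise regret bound. *)
have bound : (\int[P]_w (bregman (phi T.+1 w) u (x T.+1 w))%:E
    + \sum_(1 <= t < T.+1)
        \int[P]_w (eta t w * dotv (grad F (x t w)) (x t w - u))%:E
    <= \int[P]_w (phi T.+1 w u)%:E - (minval phi1)%:E)%E.
  rewrite (eq_big_nat _ _ gradE).
  apply: (expectation_of_bound
    (S := fun t w => eta t w * dotv (g t w) (x t w - u))) => // w.
  apply: (ftrl_pathwise (argmin w) (m := phi1 x0)) => //; first exact: dphi.
  by move=> t t1; exact: step.
(* Both corollaries drop a nonnegative term from the main claim. *)
split; first exact: bound.
split.
  apply: le_trans bound; apply: leeDr; apply: integral_ge0 => w _.
  by rewrite lee_fin (bregman_iterate (argmin w)) ?subr_ge0 ?argmin //; exact: dphi.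
move=> monotone; apply: le_trans bound; rewrite leeDl //.
rewrite big_nat_cond; apply: sume_ge0 => t /andP[/andP[t1 _] _].
by apply: integral_ge0 => w _; rewrite lee_fin mulr_ge0 ?eta_ge0.
Qed.
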